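(* Let $d\geq 1$, $n\geq 1$ and $r\geq 2$ be integers. Then $M''(n,r,d)\le \left\lfloor \frac{d(n-1)}{r-1}\right\rfloor$.
   Context: All measures are probability measures on $\mathbb{R}^d$ absolutely continuous with respect to Lebesgue measure. A partition of $\mathbb{R}^d$ into $n$ parts formed by iterated hyperplane cuts is an ordered tuple $(K_1,\dots,K_n)$ of closed convex sets (some possibly empty) obtained by starting from the single part $\mathbb{R}^d$ and repeatedly choosing one existing part $C$ and replacing it by $C\cap H^+$ and $C\cap H^-$, where $H^+,H^-$ are the two closed half-spaces of an affine hyperplane, until there are $n$ parts. $M''(n,r,d)$ is the largest integer $M''$ such that for any $M''$ measures $\mu_1,\dots,\mu_{M''}$ on $\mathbb{R}^d$ there is such a partition $(K_1,\dots,K_n)$ and a map $\ell\colon[n]\to[r]$ with $\mu_j\big(\bigcup_{i\in\ell^{-1}(s)}K_i\big)=\tfrac1r$ for all $1\le j\le M''$ and $1\le s\le r$. *)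

(* R^d is modelled as [d.-tuple R],
   carrying MathComp-Analysis' product sigma-algebra (generated by the
   coordinate projections), which is the Borel sigma-algebra of R^d. *)
From HB Require Import structures.
From mathcomp Require Import all_boot all_order all_algebra.
From mathcomp Require Import all_classical all_reals all_analysis.
Set Implicit Arguments. Unset Strict Implicit. Unset Printing Implicit Defensive.
Import Order.TTheory GRing.Theory Num.Theory.
Local Open Scope classical_set_scope.
Local Open Scope ring_scope.

Section Defs.
Variables (R : realType) (d : nat).
Notation Pt := (d.-tuple R).

Definition box (a b : Pt) : set Pt :=
  [set x | forall i : 'I_d, tnth a i <= tnth x i <= tnth b i].
Definition box_vol (a b : Pt) : R := \prod_(i < d) (tnth b i - tnth a i).

Definition lebesgue_null (A : set Pt) : Prop :=
  forall e : R, 0 < e -> exists a b : nat -> Pt,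
    [/\ (forall k i, tnth (a k) i <= tnth (b k) i),
        A `<=` \bigcup_k box (a k) (b k) &
        (\sum_(k <oo) (box_vol (a k) (b k))%:E < e%:E)%E].

Definition abs_cont (mu : probability Pt R) : Prop :=
  forall A : set Pt, measurable A -> lebesgue_null A -> mu A = 0%E.

Definition halfspace_pos (a : Pt) (c : R) : set Pt :=
  [set x | c <= \sum_(i < d) tnth a i * tnth x i].
Definition halfspace_neg (a : Pt) (c : R) : set Pt :=
  [set x | \sum_(i < d) tnth a i * tnth x i <= c].

Inductive cut_partition : seq (set Pt) -> Prop :=
  | cut_start : cut_partition [:: setT]
  | cut_step (s : seq (set Pt)) (i : nat) (a : Pt) (c : R) :
      cut_partition s -> (i < size s)%N -> (exists j, tnth a j != 0) ->
      cut_partition (take i s ++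
        [:: nth set0 s i `&` halfspace_pos a c;
            nth set0 s i `&` halfspace_neg a c] ++ drop i.+1 s).

Definition fair_split_property (n r M : nat) : Prop :=
  forall mu : 'I_M -> probability Pt R, (forall j, abs_cont (mu j)) ->
  exists K : seq (set Pt), [/\ cut_partition K, size K = n &
    exists l : 'I_n -> 'I_r, forall (j : 'I_M) (s : 'I_r),
      mu j (\bigcup_(i in [set i : 'I_n | l i = s]) nth set0 K i)
        = (r%:R^-1 : R)%:E].
End Defs.

From HB Require Import structures.
From mathcomp Require Import all_boot all_order all_algebra.
From mathcomp Require Import all_classical all_reals all_analysis.
From mathcomp Require Import zify ring lra.
Set Implicit Arguments. Unset Strict Implicit. Unset Printing Implicit Defensive.
Import Order.TTheory GRing.Theory Num.Theory.
Local Open Scope classical_set_scope.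
Local Open Scope ring_scope.

(* Put the j-th measure, j < M, uniformly on a tiny cube at the point
   (j, j^2, ..., j^d) of the moment curve.  If a hyperplane gives positive mass
   to both of its closed sides for one of these measures, it meets its cube; and
   since Vandermonde matrices are invertible, with a uniform bound on their
   inverses, no hyperplane meets d+1 of the cubes once they are small enough.
   So each of the n-1 cuts of a partition splits at most d of the measures.
   On the other hand, a measure split by k of the cuts gives positive mass to at
   most k+1 parts, while a fair division among r parties needs r such parts for
   every measure.  Summing over the M measures gives M r <= M + d (n-1). *)

Section nonnull.
Context d (T : measurableType d) (R : realType).

Definition nonnull (mu : set T -> \bar R) (A : set T) : bool := mu A != 0%E.

Variable mu : {measure set T -> \bar R}.

Lemma nonnullS (A B : set T) : measurable A -> measurable B -> A `<=` B ->
  nonnull mu A -> nonnull mu B.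
Proof.
move=> mA mB AB; apply: contra => /eqP B0.
by rewrite -measure_le0 -B0 le_measure ?inE.
Qed.

Lemma nonnull_bigcup (I : choiceType) (D : set I) (A : I -> set T) :
  finite_set D -> (forall i, D i -> measurable (A i)) ->
  nonnull mu (\bigcup_(i in D) A i) -> exists2 i, D i & nonnull mu (A i).
Proof.
move=> Dfin mA; apply: contraTP => nullA; apply/negPn; rewrite -measure_le0.
have mU : measurable (\bigcup_(i in D) A i) by exact: fin_bigcup_measurable.
rewrite (le_trans (content_sub_fsum mu Dfin mA mU (@subset_refl _ _))) // fsbig1 // => i Di.
by apply/eqP/negPn/negP => nnA; apply: nullA; exists i.
Qed.

Lemma classes_le_count_nonnull (K : seq (set T)) r (l : 'I_(size K) -> 'I_r) :
  {in K, forall A, measurable A} ->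
  (forall s, nonnull mu (\bigcup_(i in [set i | l i = s]) nth set0 K i)) ->
  (r <= count (nonnull mu) K)%N.
Proof.
move=> mK nnU; set P := [set i : 'I_(size K) | nonnull mu (nth set0 K i)]%SET.
have lP : l @: P = [set: 'I_r]%SET.
  apply/setP => s; rewrite inE; apply/imsetP.
  have [i /= lis nnKi] := nonnull_bigcup finite_finset
    (fun i _ => mK _ (mem_nth set0 (ltn_ord i))) (nnU s).
  by exists i; rewrite ?inE.
have -> : count (nonnull mu) K = #|P|.
  by rewrite -sum1_count (big_nth set0) big_mkord sum1dep_card.
by rewrite -[r]card_ord -cardsT -lP leq_imset_card.
Qed.

End nonnull.

Lemma nonnull_meets d (T : measurableType d) (R : realType) (P : probability T R)
    (S H : set T) :
  measurable S -> P S = 1%E -> measurable H -> nonnull P H -> exists x, H x /\ S x.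
Proof.
move=> mS PS1 mH; apply: contraTP => /forallNP HS; apply/negPn; rewrite -measure_le0.
have <- : P (~` S) = 0%E by rewrite probability_setC // PS1 subee.
apply: le_measure; rewrite ?inE //; first exact: measurableC.
by move=> x Hx Sx; apply: (HS x).
Qed.

Section rect.
Variable R : realType.

Definition rect n (f g : nat -> R) : set (n.-tuple R) :=
  [set x | forall i : 'I_n, f i <= tnth x i <= g i].
Arguments rect : clear implicits.

Definition cube (del : R) n (q : nat -> R) : set (n.-tuple R) :=
  rect n q (fun i => q i + del).
Arguments cube : clear implicits.

Definition tdot n (a x : n.-tuple R) : R := \sum_(i < n) tnth a i * tnth x i.

Lemma rect0 (f g : nat -> R) : rect 0 f g = setT.
Proof. by apply/seteqP; split => // x _ []. Qed.

Lemma measurable_rect n (f g : nat -> R) : measurable (rect n f g).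
Proof.
have -> : rect n f g =
    \bigcap_(i in [set: 'I_n]) ((fun x : n.-tuple R => tnth x i) @^-1` `[f i, g i]%classic).
  apply/seteqP; split => x /= xfg i; last by have := xfg i I; rewrite /= in_itv.
  by move=> _ /=; rewrite in_itv /= xfg.
apply: fin_bigcap_measurable; first exact: finite_finset.
move=> i _; rewrite -[X in measurable X]setTI.
by apply: measurable_tnth => //; exact: measurable_itv.
Qed.

Lemma box_rect n (a b : n.-tuple R) : box a b = rect n (nth 0 a) (nth 0 b).
Proof. by apply/seteqP; split => x /= xab i; have := xab i; rewrite !(tnth_nth 0). Qed.

Lemma measurable_tdot n (a : n.-tuple R) : measurable_fun setT (tdot a).
Proof.
apply: measurable_sum => i; apply: measurable_realfun.measurable_funM.
  exact: measurable_cst.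
exact: measurable_tnth.
Qed.

Lemma measurable_halfspace_pos n (a : n.-tuple R) c : measurable (halfspace_pos a c).
Proof.
have -> : halfspace_pos a c = setT `&` tdot a @^-1` `[c, +oo[%classic.
  by apply/seteqP; split => x /=; rewrite in_itv /= andbT; [|case].
exact: measurable_tdot.
Qed.

Lemma measurable_halfspace_neg n (a : n.-tuple R) c : measurable (halfspace_neg a c).
Proof.
have -> : halfspace_neg a c = setT `&` tdot a @^-1` `]-oo, c]%classic.
  by apply/seteqP; split => x /=; rewrite in_itv /=; [|case].
exact: measurable_tdot.
Qed.

Lemma rect_meets_hyperplane n (f g : nat -> R) (a x y : n.-tuple R) c :
  rect n f g x -> rect n f g y -> c <= tdot a x -> tdot a y <= c ->
  exists z, rect n f g z /\ tdot a z = c.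
Proof.
move=> fxg fyg cx yc.
have [xy|xy] := eqVneq (tdot a x) (tdot a y).
  by exists x; split => //; lra.
have yx : tdot a y < tdot a x by rewrite lt_neqAle eq_sym xy (le_trans yc).
pose t := (c - tdot a y) / (tdot a x - tdot a y).
have t01 : 0 <= t <= 1.
  apply/andP; split; first by apply: divr_ge0; rewrite subr_ge0 // ltW.
  by rewrite ler_pdivrMr ?subr_gt0 // mul1r lerB.
exists [tuple tnth y i + t * (tnth x i - tnth y i) | i < n]; split.
  move=> i; rewrite tnth_mktuple; move: (fxg i) (fyg i) t01.
  case/andP => ? ?; case/andP => ? ?; case/andP => ? ?; apply/andP; split; nra.
have -> : tdot a [tuple tnth y i + t * (tnth x i - tnth y i) | i < n] =
          tdot a y + t * (tdot a x - tdot a y).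
  rewrite /tdot mulrBr !mulr_sumr -sumrB -big_split /=.
  by apply: eq_bigr => i _; rewrite tnth_mktuple; ring.
by rewrite /t mulfVK ?subr_eq0 //; ring.
Qed.

End rect.
Arguments rect {R}.
Arguments cube {R}.

Lemma uniform_prob_itv_le (R : realType) (a b : R) (ab : a < b) (x y : R) : x <= y ->
  (uniform_prob ab `[x, y]%classic <= ((y - x) / (b - a))%:E)%E.
Proof.
move=> xy; have ba_gt0 : 0 < b - a by rewrite subr_gt0.
apply: (@le_trans _ _ (\int[lebesgue_measure]_(z in `[x, y]%classic) ((b - a)^-1)%:E))%E.
  apply: ge0_le_integral => //.
  - by move=> z _; rewrite lee_fin uniform_pdf_ge0.
  - by apply/measurable_realfun.measurable_EFinP/measurable_funTS;
      exact: measurable_uniform_pdf.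
  - by move=> z _; rewrite lee_fin /uniform_pdf; case: ifPn => _ //; rewrite invr_ge0 ltW.
rewrite integral_cst //= lebesgue_measure_itv /= lte_fin.
case: ltgtP xy => // [xy _|-> _]; first by rewrite -EFinD -EFinM mulrC.
by rewrite subrr mul0r mule0.
Qed.

Section cube_prob.
Variables (R : realType) (del : R).
Hypothesis del_gt0 : 0 < del.

(* The first factor is [measurableTypeR R], the type on which [uniform_prob] lives. *)
Definition tcons n (p : measurableTypeR R * n.-tuple R) : n.+1.-tuple R := [tuple of p.1 :: p.2].

Lemma measurable_tcons n : measurable_fun setT (@tcons n).
Proof. exact: measurable_cons. Qed.

HB.instance Definition _ n :=
  isMeasurableFun.Build _ _ _ _ (@tcons n) (@measurable_tcons n).

Lemma ltr_add_del (x : R) : x < x + del.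
Proof. by rewrite ltrDl. Qed.

Fixpoint cube_prob (q : nat -> R) (n : nat) : probability (n.-tuple R) R :=
  match n with
  | 0 => \d_([tuple] : 0.-tuple R)
  | n'.+1 => distribution
      (uniform_prob (ltr_add_del (q 0%N)) \x cube_prob (fun i => q i.+1) n')%E
      (@tcons n')
  end.

Lemma tcons_preimage_rect n (f g : nat -> R) : @tcons n @^-1` rect n.+1 f g =
  `[f 0%N, g 0%N]%classic `*` rect n (fun i => f i.+1) (fun i => g i.+1).
Proof.
apply/seteqP; split => [[x t] /= fxg|[x t] /= [fxg0 fxg] [[|i] lti]].
- split; first by have := fxg ord0; rewrite /= in_itv /= (tnth_nth 0).
  by move=> i; have := fxg (lift ord0 i); rewrite !(tnth_nth 0).
- by move: fxg0; rewrite /= in_itv /= (tnth_nth 0).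
- by have := fxg (Ordinal (lti : (i < n)%N)); rewrite !(tnth_nth 0).
Qed.

Lemma cube_prob_rect_le (q f g : nat -> R) n : (forall i, (i < n)%N -> f i <= g i) ->
  (cube_prob q n (rect n f g) <= (\prod_(i < n) ((g i - f i) / del))%:E)%E.
Proof.
elim: n q f g => [|n IH] q f g fg; first by rewrite rect0 big_ord0 probability_setT.
rewrite /= /distribution /pushforward tcons_preimage_rect.
rewrite product_measure1E //; last exact: measurable_rect.
rewrite big_ord_recl EFinM.
apply: lee_pmul => //.
  by apply: le_trans (uniform_prob_itv_le _ (fg 0%N _)) _; rewrite // addrAC subrr add0r.
by apply: IH => i lti; apply: fg.
Qed.

Lemma cube_prob_cube (q : nat -> R) n : cube_prob q n (cube del n q) = 1%E.
Proof.
elim: n q => [|n IH] q; first by rewrite /cube rect0 probability_setT.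
rewrite /= /distribution /pushforward /cube tcons_preimage_rect.
rewrite product_measure1E //; last exact: measurable_rect.
rewrite [X in (_ * X)%E]IH mule1.
exact: integral_uniform_pdf1 (ltr_add_del _) (@subset_refl _ _).
Qed.

Lemma cube_prob_abs_cont (q : nat -> R) n : abs_cont (cube_prob q n).
Proof.
move=> A mA nullA; apply/eqP; rewrite eq_le measure_ge0 andbT.
apply/lee_addgt0Pr => e e_gt0; rewrite add0e.
have deln_gt0 : 0 < del ^+ n by rewrite exprn_gt0.
have [a [b [ab cover vol_lt]]] := nullA _ (mulr_gt0 e_gt0 deln_gt0).
have mbox k : measurable (box (a k) (b k)) by rewrite box_rect; exact: measurable_rect.
apply: le_trans (measure_sigma_subadditive _ mbox mA cover) _.
apply: (@le_trans _ _ (\sum_(k <oo) ((del ^+ n)^-1)%:E * (box_vol (a k) (b k))%:E)%E).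
  apply: lee_nneseries => // k _; rewrite box_rect -EFinM.
  apply: le_trans (cube_prob_rect_le _ _) _.
    by move=> i lti; have := ab k (Ordinal lti); rewrite !(tnth_nth 0).
  rewrite lee_fin /box_vol big_split /= prodr_const card_ord exprVn mulrC.
  by under eq_bigr do rewrite -!tnth_nth.
rewrite nneseriesZl; last first.
  by move=> k _; rewrite lee_fin; apply: prodr_ge0 => i _; rewrite subr_ge0.
apply: (@le_trans _ _ (((del ^+ n)^-1)%:E * (e * del ^+ n)%:E)%E).
  by apply: lee_wpmul2l; [rewrite lee_fin invr_ge0 ltW | exact: ltW].
by rewrite -EFinM mulrCA mulVf ?mulr1 // gt_eqF.
Qed.

End cube_prob.

Section cut_partition.
Variables (R : realType) (d : nat).
Local Notation Pt := (d.-tuple R).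

Lemma cut_partition_measurable (K : seq (set Pt)) :
  cut_partition K -> {in K, forall A, measurable A}.
Proof.
elim=> [|s i a c _ IH lti _] A; first by rewrite inE => /eqP ->.
have mC : measurable (nth set0 s i) by exact: IH (mem_nth set0 lti).
rewrite !mem_cat !inE -orbA => /or4P[/mem_take|/eqP->|/eqP->|/mem_drop].
- exact: IH.
- exact: measurableI mC (measurable_halfspace_pos a c).
- exact: measurableI mC (measurable_halfspace_neg a c).
- exact: IH.
Qed.

Definition splits (mu : set Pt -> \bar R) (a : Pt) (c : R) : bool :=
  nonnull mu (halfspace_pos a c) && nonnull mu (halfspace_neg a c).

Lemma nonnull_cut_le (mu : {measure set Pt -> \bar R}) (C : set Pt) a c :
  measurable C ->
  (nonnull mu (C `&` halfspace_pos a c) + nonnull mu (C `&` halfspace_neg a c)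
    <= nonnull mu C + splits mu a c)%N.
Proof.
move=> mC; have nnI H : measurable H ->
    nonnull mu (C `&` H) ==> nonnull mu C && nonnull mu H.
  move=> mH; apply/implyP => nnCH; apply/andP; split; apply: nonnullS nnCH;
    by [apply: measurableI | | exact: subIsetl | exact: subIsetr].
move: (nnI _ (measurable_halfspace_pos a c)) (nnI _ (measurable_halfspace_neg a c)).
rewrite /splits; case: (nonnull mu C); case: (nonnull mu (halfspace_pos a c));
case: (nonnull mu (halfspace_neg a c)); case: (nonnull mu (C `&` _));
by case: (nonnull mu (C `&` _)).
Qed.

Lemma cut_partition_cuts (K : seq (set Pt)) : cut_partition K ->
  exists hs : seq (Pt * R), [/\ size K = (size hs).+1,
    all (fun h => [exists i, tnth h.1 i != 0]) hs &
    forall mu : {measure set Pt -> \bar R},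
      (count (nonnull mu) K <= 1 + count (fun h => splits mu h.1 h.2) hs)%N].
Proof.
elim=> [|s i a c cuts [hs [sizes normals count_le]] lti [j aj0]].
  by exists [::]; split => // mu /=; case: nonnull.
exists ((a, c) :: hs); split.
- by rewrite !size_cat /= size_take lti size_drop sizes; lia.
- by rewrite /= normals andbT; apply/existsP; exists j.
move=> mu; have := count_le mu.
rewrite -{1}(cat_take_drop i s) (drop_nth set0 lti) !count_cat /= addn0.
have := nonnull_cut_le mu a c (cut_partition_measurable cuts (mem_nth set0 lti)).
move: (nonnull mu (nth set0 s i `&` _)) (nonnull mu (nth set0 s i `&` halfspace_neg a c)).
move: (nonnull mu (nth set0 s i)) (splits mu a c) => C S P N.
lia.
Qed.

End cut_partition.

Lemma sum_norm_col_le (F : numFieldType) n (V : 'M[F]_n) (v : 'cV[F]_n) (e : F) :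
  V \in unitmx -> (forall k, `|(V *m v) k 0| <= e) ->
  \sum_l `|v l 0| <= (\sum_l \sum_k `|invmx V l k|) * e.
Proof.
move=> Vunit Vv_le; rewrite mulr_suml; apply: ler_sum => l _.
rewrite -{1}(mulKmx Vunit v) mxE mulr_suml.
apply: le_trans (ler_norm_sum _ _ _) _; apply: ler_sum => k _.
by rewrite normrM ler_wpM2l.
Qed.

Section moment_curve.
Variables (R : realType) (d M : nat).

Definition moment_point (j : nat) : nat -> R := fun i => j%:R ^+ i.+1.

Definition moment_mx (f : 'I_d.+1 -> 'I_M) : 'M[R]_d.+1 :=
  \matrix_(k, l) (f k)%:R ^+ l.

Lemma moment_mx_unit f : injective f -> moment_mx f \in unitmx.
Proof.
move=> finj; rewrite unitmxE unitfE.
have -> : moment_mx f = (Vandermonde d.+1 (\row_k (f k)%:R))^T.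
  by apply/matrixP => k l; rewrite !mxE.
rewrite det_tr det_Vandermonde; apply/prodf_neq0 => i _; apply/prodf_neq0 => j ij.
rewrite !mxE subr_eq0 eqr_nat; apply: contraTneq ij => /val_inj/finj->.
by rewrite ltnn.
Qed.

(* A bound on the inverses of all the matrices [moment_mx f]; for a non-injective
   [f] the summand is a junk value, which does no harm. *)
Definition moment_inv_bound : R :=
  \sum_(f : {ffun 'I_d.+1 -> 'I_M}) \sum_l \sum_k `|invmx (moment_mx f) l k|.

Definition moment_side : R := (moment_inv_bound + 1)^-1.

Lemma moment_inv_bound_ge0 : 0 <= moment_inv_bound.
Proof. by do 3![apply: sumr_ge0 => ? _]. Qed.

Lemma moment_side_gt0 : 0 < moment_side.
Proof. by rewrite invr_gt0 ltr_wpDl // moment_inv_bound_ge0. Qed.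

Lemma moment_inv_bound_side_lt1 : moment_inv_bound * moment_side < 1.
Proof.
have C_ge0 := moment_inv_bound_ge0.
by rewrite ltr_pdivrMr ?mul1r ?ltrDl // ltr_wpDl.
Qed.

Lemma moment_inv_le_bound (f : 'I_d.+1 -> 'I_M) :
  \sum_l \sum_k `|invmx (moment_mx f) l k| <= moment_inv_bound.
Proof.
rewrite /moment_inv_bound (bigD1 (finfun f)) //=.
have -> : moment_mx (finfun f) = moment_mx f by apply/matrixP => k l; rewrite !mxE ffunE.
by rewrite lerDl; do 3![apply: sumr_ge0 => ? _].
Qed.

Lemma moment_cubes_off_hyperplane (f : 'I_d.+1 -> 'I_M) (a : d.-tuple R) c :
  injective f -> (exists i, tnth a i != 0) ->
  ~ (forall k, exists z, cube moment_side d (moment_point (f k)) z /\ tdot a z = c).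
Proof.
move=> finj [i0 ai0] /choice[z zP].
(* Entry k of [moment_mx f *m v] is the dot product of [a] with the small vector
   [moment_point (f k) - z k]; inverting [moment_mx f] then bounds the norm of
   [v], hence that of [a], by a fraction of the norm of [a]. *)
pose v : 'cV[R]_d.+1 := \col_l (if l : nat is l'.+1 then nth 0 a l' else - c).
pose norm_a := \sum_(i < d) `|tnth a i|.
have norm_a_gt0 : 0 < norm_a.
  rewrite /norm_a (bigD1 i0) //= ltr_pwDl ?normr_gt0 //; exact: sumr_ge0.
have Vv_le k : `|(moment_mx f *m v) k 0| <= moment_side * norm_a.
  have [zk dot_zk] := zP k.
  rewrite mxE big_ord_recl !mxE expr0 mul1r.
  have -> : \sum_(i < d) moment_mx f k (lift ord0 i) * v (lift ord0 i) 0 =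
            tdot a [tuple moment_point (f k) i | i < d].
    by apply: eq_bigr => i _; rewrite !mxE tnth_mktuple (tnth_nth 0) mulrC.
  rewrite -dot_zk /tdot -sumrN -big_split /= mulr_sumr.
  apply: le_trans (ler_norm_sum _ _ _) _; apply: ler_sum => i _.
  rewrite tnth_mktuple addrC -mulrBr normrM mulrC ler_wpM2r //.
  by have /andP[] := zk i; rewrite ler_norml => ? ?; apply/andP; split; lra.
have norm_a_le : norm_a <= \sum_l `|v l 0|.
  rewrite big_ord_recl ler_wpDl //; apply: ler_sum => i _.
  by rewrite !mxE /= (tnth_nth 0).
have := le_trans norm_a_le (sum_norm_col_le (moment_mx_unit finj) Vv_le).
have side_norm_ge0 : 0 <= moment_side * norm_a by rewrite mulr_ge0 ?ltW ?moment_side_gt0.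
move/le_trans/(_ (ler_wpM2r side_norm_ge0 (moment_inv_le_bound f))).
have := moment_inv_bound_side_lt1; nra.
Qed.

End moment_curve.

Section moment_probabilities.
Variables (R : realType) (d M : nat).

Definition moment_prob (j : 'I_M) : probability (d.-tuple R) R :=
  cube_prob (moment_side_gt0 R d M) (moment_point R j) d.

Lemma moment_prob_abs_cont j : abs_cont (moment_prob j).
Proof. exact: cube_prob_abs_cont. Qed.

Lemma card_splits_moment_prob_le (a : d.-tuple R) c : (exists i, tnth a i != 0) ->
  (#|[pred j | splits (moment_prob j) a c]| <= d)%N.
Proof.
move=> a_neq0; rewrite leqNgt; apply/negP => card_gt.
pose f (k : 'I_d.+1) : 'I_M := enum_val (widen_ord card_gt k).
have finj : injective f.
  by move=> k k' /enum_val_inj/(congr1 val) /= kk'; apply: val_inj.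
apply: (moment_cubes_off_hyperplane (c := c) finj a_neq0) => k.
have := enum_valP (widen_ord card_gt k); rewrite -/(f k) inE => /andP[nnP nnN].
have cube_prob1 := cube_prob_cube (moment_side_gt0 R d M) (moment_point R (f k)) d.
have mcube : measurable (cube (moment_side R d M) d (moment_point R (f k))).
  exact: measurable_rect.
have [x [Px cube_x]] := nonnull_meets mcube cube_prob1 (measurable_halfspace_pos a c) nnP.
have [y [Ny cube_y]] := nonnull_meets mcube cube_prob1 (measurable_halfspace_neg a c) nnN.
exact: rect_meets_hyperplane cube_x cube_y Px Ny.
Qed.

Lemma sum_count_splits_moment_prob_le (hs : seq (d.-tuple R * R)) :
  all (fun h => [exists i, tnth h.1 i != 0]) hs ->
  (\sum_(j < M) count (fun h => splits (moment_prob j) h.1 h.2) hs <= size hs * d)%N.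
Proof.
move=> normals_neq0.
rewrite (eq_bigr _ (fun j _ => esym (sum1_count _ _))) (exchange_big_dep predT) //=.
rewrite mulnC -[X in (_ <= _ * X)%N]count_predT -iter_addn_0 -big_const_seq.
rewrite big_seq [X in (_ <= X)%N]big_seq; apply: leq_sum => -[a c] /(allP normals_neq0).
move=> /existsP a_neq0; rewrite (eq_bigl [in [pred j | splits (moment_prob j) a c]]) //.
by rewrite sum1_card card_splits_moment_prob_le.
Qed.

End moment_probabilities.

Theorem mainTheorem3 (R : realType) (d n r : nat) :
  (1 <= d)%N -> (1 <= n)%N -> (2 <= r)%N ->
  forall M : nat, fair_split_property R d n r M ->
  (M <= (d * (n - 1)) %/ (r - 1))%N.
Proof.
move=> _ _ r_ge2 M fair.
have [K [cutK <- [l fairK]]] := fair _ (@moment_prob_abs_cont R d M).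
have [hs [sizeK normals_neq0 count_le]] := cut_partition_cuts cutK.
have parts_ge j : (r <= 1 + count (fun h => splits (@moment_prob R d M j) h.1 h.2) hs)%N.
  apply: leq_trans (count_le _); apply: (classes_le_count_nonnull (l := l)).
    exact: cut_partition_measurable.
  move=> s; apply/eqP => null0; have : (r%:R^-1)%:E = 0%E :> \bar R.
    by rewrite -(fairK j s); exact: null0.
  by move/eqP; rewrite eqe invr_eq0 pnatr_eq0; lia.
have : (\sum_(j < M) r
    <= \sum_(j < M) (1 + count (fun h => splits (@moment_prob R d M j) h.1 h.2) hs))%N.
  by apply: leq_sum => j _; exact: parts_ge.
rewrite big_split /= !sum_nat_const card_ord muln1 => sum_ge.
have := leq_trans sum_ge (leq_add (leqnn M) (sum_count_splits_moment_prob_le M normals_neq0)).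
rewrite leq_divRL ?subn_gt0 // sizeK subn1 /=; nia.
Qed.
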